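(* Let $\mathcal{F}_{-\frac12}=C^\infty_{\mathbb{C}}(S^{1|1})$ with even part $(\mathcal{F}_{-\frac12})_0=\{f_0(x)\}$ and odd part $(\mathcal{F}_{-\frac12})_1=\{\xi f_1(x)\}$, equipped with the operation (defined for pure-parity $f,g$ and extended bilinearly) $$(f,g)=-\tfrac12\,\overline{D}(f)\,g+\tfrac12\,(-1)^{\sigma(f)}\,f\,\overline{D}(g).$$ Then: (1) $(\mathcal{F}_{-\frac12})_1$ is closed under $(\,,\,)$ and is a commutative associative algebra; (2) setting $\rho_\psi v:=(\psi,v)$ for $\psi\in(\mathcal{F}_{-\frac12})_1$, $v\in(\mathcal{F}_{-\frac12})_0$, one has $\rho_\psi v\in(\mathcal{F}_{-\frac12})_0$ and $\rho_\varphi\circ\rho_\psi+\rho_\psi\circ\rho_\varphi=\rho_{(\varphi,\psi)}$ for all $\varphi,\psi\in(\mathcal{F}_{-\frac12})_1$; (3) the map $(\,,\,):(\mathcal{F}_{-\frac12})_0\otimes(\mathcal{F}_{-\frac12})_0\to(\mathcal{F}_{-\frac12})_1$ is antisymmetric and satisfies $\rho_\psi(v,w)=(\rho_\psi v,w)+(v,\rho_\psi w)$ for all $\psi\in(\mathcal{F}_{-\frac12})_1$, $v,w\in(\mathcal{F}_{-\frac12})_0$; (4) $(u,(v,w))+(v,(w,u))+(w,(u,v))=0$ for all $u,v,w\in(\mathcal{F}_{-\frac12})_0$.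
   Context: The supercircle $S^{1|1}$ has superalgebra of functions $C^\infty_{\mathbb{C}}(S^1)[\xi]$: elements $f=f_0(x)+\xi f_1(x)$ with $f_0,f_1$ smooth complex functions on $S^1$, $\xi$ odd with $\xi^2=0$, $x\xi=\xi x$. Parity: $\sigma(f_0)=0$, $\sigma(\xi f_1)=1$. $\partial_x$ acts coefficientwise, $\partial_\xi f=f_1$, and $\overline{D}=\partial_\xi-\xi\,\partial_x$. The operation above is the order-$\frac12$ supertransvectant $(f,g)=\mu\,\overline{D}(f)g-(-1)^{\sigma(f)}\lambda f\overline{D}(g)$ with $\lambda=\mu=-\frac12$. *)

From Stdlib Require Import Reals.
From Coquelicot Require Import Coquelicot.

Open Scope R_scope.

Definition smooth_R (g : R -> R) : Prop := forall (n : nat) (x : R), ex_derive_n g n x.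

(* a complex-valued function on S^1, seen as a 2 pi-periodic function on R,
   is smooth iff its real and imaginary parts are smooth *)
Definition smooth_S1 (f : R -> C) : Prop :=
  smooth_R (fun x => Re (f x)) /\ smooth_R (fun x => Im (f x)) /\
  (forall x : R, f (x + 2 * PI) = f x).

Definition dxC (f : R -> C) : R -> C :=
  fun x => (Derive (fun t => Re (f t)) x, Derive (fun t => Im (f t)) x).

(** * Functions on the supercircle S^{1|1}: f = f0(x) + xi f1(x) *)

Record sfun : Type := SFun { f0 : R -> C ; f1 : R -> C }.

Definition in_F (f : sfun) : Prop := smooth_S1 (f0 f) /\ smooth_S1 (f1 f).

Definition is_even (f : sfun) : Prop := in_F f /\ f1 f = (fun _ => RtoC 0).
Definition is_odd (f : sfun) : Prop := in_F f /\ f0 f = (fun _ => RtoC 0).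

Definition sf0 : sfun := SFun (fun _ => RtoC 0) (fun _ => RtoC 0).

Definition sf_add (f g : sfun) : sfun :=
  SFun (fun x => Cplus (f0 f x) (f0 g x)) (fun x => Cplus (f1 f x) (f1 g x)).

Definition sf_opp (f : sfun) : sfun :=
  SFun (fun x => Copp (f0 f x)) (fun x => Copp (f1 f x)).

Definition sf_scale (c : C) (f : sfun) : sfun :=
  SFun (fun x => Cmult c (f0 f x)) (fun x => Cmult c (f1 f x)).

(* (a + xi b)(c + xi d) = ac + xi (ad + bc), since xi^2 = 0 and x xi = xi x *)
Definition sf_mul (f g : sfun) : sfun :=
  SFun (fun x => Cmult (f0 f x) (f0 g x))
       (fun x => Cplus (Cmult (f0 f x) (f1 g x)) (Cmult (f1 f x) (f0 g x))).

Definition xi : sfun := SFun (fun _ => RtoC 0) (fun _ => RtoC 1).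

Definition pdx (f : sfun) : sfun := SFun (dxC (f0 f)) (dxC (f1 f)).
Definition pdxi (f : sfun) : sfun := SFun (f1 f) (fun _ => RtoC 0).

Definition Dbar (f : sfun) : sfun := sf_add (pdxi f) (sf_opp (sf_mul xi (pdx f))).

Definition even_part (f : sfun) : sfun := SFun (f0 f) (fun _ => RtoC 0).
Definition odd_part (f : sfun) : sfun := SFun (fun _ => RtoC 0) (f1 f).

(* The operation (f, g) = mu Dbar(f) g - (-1)^{sigma(f)} lambda f Dbar(g),
   lambda = mu = -1/2, on pure-parity f, extended bilinearly:
   (f, g) = -1/2 Dbar(f) g + 1/2 f_0 Dbar(g) - 1/2 f_1 Dbar(g)
   where f = f_0 + f_1 is the decomposition into even/odd parts. *)
Definition half : C := RtoC (/ 2).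

Definition br (f g : sfun) : sfun :=
  sf_add (sf_scale (Copp half) (sf_mul (Dbar f) g))
    (sf_add (sf_scale half (sf_mul (even_part f) (Dbar g)))
            (sf_opp (sf_scale half (sf_mul (odd_part f) (Dbar g))))).

Definition rho (psi v : sfun) : sfun := br psi v.

(* On pure-parity components the bracket is explicit: writing odd elements as
   xi p and even ones as a,
     (xi p, xi q) = - xi p q,   (xi p, a) = - p a / 2,   (a, xi c) = a c / 2,
     (a, b) = xi (a' b - a b') / 2.
   Every claim then becomes a pointwise identity between complex polynomials in
   the components and their derivatives; only the derivation property (3)
   needs the Leibniz rule.  The closure claims reduce to the closure of smooth
   2 pi-periodic functions under sums, products and d/dx. *)

From Stdlib Require Import Reals Wf_nat FunctionalExtensionality.
From Coquelicot Require Import Coquelicot.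

Lemma ex_derive_n_Derive (h : R -> R) (n : nat) (x : R) :
  (forall y, ex_derive h y) ->
  ex_derive_n (Derive h) n x <-> ex_derive_n h (S n) x.
Proof.
  intros Hh; destruct n as [|n]; [split; intros _; [apply Hh | exact I]|].
  simpl; split; apply ex_derive_ext; intros t;
    rewrite (Derive_n_comp h n 1), Nat.add_1_r; reflexivity.
Qed.

Lemma smooth_R_ex_derive (h : R -> R) : smooth_R h -> forall x, ex_derive h x.
Proof. intros Hh x; exact (Hh 1%nat x). Qed.

Lemma smooth_R_Derive (h : R -> R) : smooth_R h -> smooth_R (Derive h).
Proof.
  intros Hh n x; apply ex_derive_n_Derive; [apply smooth_R_ex_derive|]; auto.
Qed.

Lemma smooth_R_const (c : R) : smooth_R (fun _ => c).
Proof. intros n x; apply ex_derive_n_const. Qed.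

Lemma smooth_R_plus (f g : R -> R) :
  smooth_R f -> smooth_R g -> smooth_R (fun t => f t + g t).
Proof.
  intros Hf Hg n x; apply ex_derive_n_plus; apply filter_forall; auto.
Qed.

Lemma smooth_R_opp (f : R -> R) : smooth_R f -> smooth_R (fun t => - f t).
Proof. intros Hf n x; apply ex_derive_n_opp, Hf. Qed.

Lemma smooth_R_mult (f g : R -> R) :
  smooth_R f -> smooth_R g -> smooth_R (fun t => f t * g t).
Proof.
  intros Hf Hg n; revert f g Hf Hg.
  induction n as [n IH] using lt_wf_ind; intros f g Hf Hg x.
  destruct n as [|n]; [exact I|].
  apply ex_derive_n_Derive.
  { intros y; apply ex_derive_mult; apply smooth_R_ex_derive; assumption. }
  apply (ex_derive_n_ext (fun t => Derive f t * g t + f t * Derive g t)).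
  { intros t; rewrite Derive_mult by (apply smooth_R_ex_derive; assumption).
    reflexivity. }
  apply (ex_derive_n_plus (fun t => Derive f t * g t) (fun t => f t * Derive g t));
    apply filter_forall; intros y k Hk; apply IH;
    auto using smooth_R_Derive with arith.
Qed.

Lemma Derive_periodic (f : R -> R) (T : R) :
  (forall y, f (y + T) = f y) -> forall x, Derive f (x + T) = Derive f x.
Proof.
  intros Hf x.
  transitivity (Derive_n (fun y => f (y + T)) 1 x).
  - symmetry; apply Derive_n_comp_trans.
  - apply Derive_ext; exact Hf.
Qed.

Lemma smooth_S1_const (c : C) : smooth_S1 (fun _ => c).
Proof. repeat split; apply smooth_R_const. Qed.

Lemma smooth_S1_plus (f g : R -> C) :
  smooth_S1 f -> smooth_S1 g -> smooth_S1 (fun x => Cplus (f x) (g x)).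
Proof.
  intros (Hf1 & Hf2 & Hf3) (Hg1 & Hg2 & Hg3); repeat split.
  - exact (smooth_R_plus _ _ Hf1 Hg1).
  - exact (smooth_R_plus _ _ Hf2 Hg2).
  - intros x; rewrite Hf3, Hg3; reflexivity.
Qed.

Lemma smooth_S1_opp (f : R -> C) : smooth_S1 f -> smooth_S1 (fun x => Copp (f x)).
Proof.
  intros (Hf1 & Hf2 & Hf3); repeat split.
  - exact (smooth_R_opp _ Hf1).
  - exact (smooth_R_opp _ Hf2).
  - intros x; rewrite Hf3; reflexivity.
Qed.

Lemma smooth_S1_mult (f g : R -> C) :
  smooth_S1 f -> smooth_S1 g -> smooth_S1 (fun x => Cmult (f x) (g x)).
Proof.
  intros (Hf1 & Hf2 & Hf3) (Hg1 & Hg2 & Hg3); repeat split.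
  - apply (smooth_R_plus (fun t => Re (f t) * Re (g t))
                         (fun t => - (Im (f t) * Im (g t))));
      [|apply smooth_R_opp]; apply smooth_R_mult; assumption.
  - apply (smooth_R_plus (fun t => Re (f t) * Im (g t))
                         (fun t => Im (f t) * Re (g t)));
      apply smooth_R_mult; assumption.
  - intros x; rewrite Hf3, Hg3; reflexivity.
Qed.

Lemma smooth_S1_dxC (f : R -> C) : smooth_S1 f -> smooth_S1 (dxC f).
Proof.
  intros (Hf1 & Hf2 & Hf3); repeat split.
  - exact (smooth_R_Derive _ Hf1).
  - exact (smooth_R_Derive _ Hf2).
  - intros x; unfold dxC.
    rewrite !(Derive_periodic _ (2 * PI)); [reflexivity| |];
      intros y; rewrite Hf3; reflexivity.
Qed.

Ltac solve_smooth_S1 :=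
  repeat match goal with
  | |- smooth_S1 (fun _ => Cplus _ _) => apply smooth_S1_plus
  | |- smooth_S1 (fun _ => Copp _) => apply smooth_S1_opp
  | |- smooth_S1 (fun _ => Cmult _ _) => apply smooth_S1_mult
  | |- smooth_S1 (dxC _) => apply smooth_S1_dxC
  | |- smooth_S1 (fun _ => _) => apply smooth_S1_const
  | |- smooth_S1 _ => assumption
  end.

Definition derivable_C (f : R -> C) : Prop :=
  forall x, ex_derive (fun t => Re (f t)) x /\ ex_derive (fun t => Im (f t)) x.

Lemma smooth_S1_derivable_C (f : R -> C) : smooth_S1 f -> derivable_C f.
Proof. intros (Hf1 & Hf2 & _) x; split; apply smooth_R_ex_derive; assumption. Qed.

Lemma dxC_const (c : C) : dxC (fun _ => c) = (fun _ => RtoC 0).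
Proof.
  apply functional_extensionality; intros x; unfold dxC.
  rewrite !Derive_const; reflexivity.
Qed.

Lemma dxC_mult (f g : R -> C) : derivable_C f -> derivable_C g ->
  dxC (fun x => Cmult (f x) (g x)) =
  (fun x => Cplus (Cmult (dxC f x) (g x)) (Cmult (f x) (dxC g x))).
Proof.
  intros Hf Hg; apply functional_extensionality; intros x.
  destruct (Hf x) as [Hf1 Hf2], (Hg x) as [Hg1 Hg2].
  unfold dxC, Cmult, Cplus, Re, Im; simpl.
  apply injective_projections; simpl.
  - rewrite Derive_minus by (apply ex_derive_mult; assumption).
    rewrite !Derive_mult by assumption; ring.
  - rewrite Derive_plus by (apply ex_derive_mult; assumption).
    rewrite !Derive_mult by assumption; ring.
Qed.

Lemma sfun_ext (f g : sfun) :
  (forall x, f0 f x = f0 g x) -> (forall x, f1 f x = f1 g x) -> f = g.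
Proof.
  destruct f, g; simpl; intros E0 E1.
  f_equal; apply functional_extensionality; assumption.
Qed.

Ltac sfun_eq :=
  apply sfun_ext; intros; simpl;
  apply injective_projections; simpl; field.

Definition even_sf (a : R -> C) : sfun := SFun a (fun _ => RtoC 0).
Definition odd_sf (p : R -> C) : sfun := SFun (fun _ => RtoC 0) p.

Lemma is_even_even_sf (v : sfun) :
  is_even v -> exists a, smooth_S1 a /\ v = even_sf a.
Proof.
  destruct v as [a p]; intros [[Ha _] E]; simpl in *; subst p.
  exists a; split; [assumption | reflexivity].
Qed.

Lemma is_odd_odd_sf (psi : sfun) :
  is_odd psi -> exists p, smooth_S1 p /\ psi = odd_sf p.
Proof.
  destruct psi as [a p]; intros [[_ Hp] E]; simpl in *; subst a.
  exists p; split; [assumption | reflexivity].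
Qed.

Lemma even_sf_is_even (a : R -> C) (Ha : smooth_S1 a) : is_even (even_sf a).
Proof. split; [split; [exact Ha | exact (smooth_S1_const (RtoC 0))] | reflexivity]. Qed.

Lemma odd_sf_is_odd (p : R -> C) (Hp : smooth_S1 p) : is_odd (odd_sf p).
Proof. split; [split; [exact (smooth_S1_const (RtoC 0)) | exact Hp] | reflexivity]. Qed.

Ltac br_components :=
  unfold br, Dbar, pdx, pdxi, sf_mul, sf_add, sf_opp, sf_scale,
    even_part, odd_part, even_sf, odd_sf, xi; simpl;
  rewrite ?dxC_const; sfun_eq.

Lemma br_odd_odd (p q : R -> C) :
  br (odd_sf p) (odd_sf q) = odd_sf (fun x => Copp (Cmult (p x) (q x))).
Proof. br_components. Qed.

Lemma br_odd_even (p a : R -> C) :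
  br (odd_sf p) (even_sf a) = even_sf (fun x => Cmult (Copp half) (Cmult (p x) (a x))).
Proof. br_components. Qed.

Lemma br_even_odd (a c : R -> C) :
  br (even_sf a) (odd_sf c) = even_sf (fun x => Cmult half (Cmult (a x) (c x))).
Proof. br_components. Qed.

Lemma br_even_even (a b : R -> C) :
  br (even_sf a) (even_sf b) =
  odd_sf (fun x => Cmult half (Cplus (Cmult (dxC a x) (b x))
                                     (Copp (Cmult (a x) (dxC b x))))).
Proof. br_components. Qed.

Lemma br_odd_closed (phi psi : sfun) :
  is_odd phi -> is_odd psi -> is_odd (br phi psi).
Proof.
  intros (p & Hp & ->)%is_odd_odd_sf (q & Hq & ->)%is_odd_odd_sf.
  rewrite br_odd_odd; apply odd_sf_is_odd; solve_smooth_S1.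
Qed.

Lemma br_odd_comm (phi psi : sfun) :
  is_odd phi -> is_odd psi -> br phi psi = br psi phi.
Proof.
  intros (p & _ & ->)%is_odd_odd_sf (q & _ & ->)%is_odd_odd_sf.
  rewrite !br_odd_odd; sfun_eq.
Qed.

Lemma br_odd_assoc (phi psi chi : sfun) :
  is_odd phi -> is_odd psi -> is_odd chi ->
  br (br phi psi) chi = br phi (br psi chi).
Proof.
  intros (p & _ & ->)%is_odd_odd_sf (q & _ & ->)%is_odd_odd_sf
    (r & _ & ->)%is_odd_odd_sf.
  rewrite !br_odd_odd; sfun_eq.
Qed.

Lemma rho_even_closed (psi v : sfun) :
  is_odd psi -> is_even v -> is_even (rho psi v).
Proof.
  intros (p & Hp & ->)%is_odd_odd_sf (a & Ha & ->)%is_even_even_sf.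
  unfold rho; rewrite br_odd_even; apply even_sf_is_even; solve_smooth_S1.
Qed.

Lemma rho_anticomm (phi psi v : sfun) :
  is_odd phi -> is_odd psi -> is_even v ->
  sf_add (rho phi (rho psi v)) (rho psi (rho phi v)) = rho (br phi psi) v.
Proof.
  intros (p & _ & ->)%is_odd_odd_sf (q & _ & ->)%is_odd_odd_sf
    (a & _ & ->)%is_even_even_sf.
  unfold rho; rewrite !br_odd_even, br_odd_odd, br_odd_even; sfun_eq.
Qed.

Lemma br_even_closed (v w : sfun) :
  is_even v -> is_even w -> is_odd (br v w).
Proof.
  intros (a & Ha & ->)%is_even_even_sf (b & Hb & ->)%is_even_even_sf.
  rewrite br_even_even; apply odd_sf_is_odd; solve_smooth_S1.
Qed.

Lemma br_even_anticomm (v w : sfun) :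
  is_even v -> is_even w -> br v w = sf_opp (br w v).
Proof.
  intros (a & _ & ->)%is_even_even_sf (b & _ & ->)%is_even_even_sf.
  rewrite !br_even_even; sfun_eq.
Qed.

Lemma rho_br_even (psi v w : sfun) :
  is_odd psi -> is_even v -> is_even w ->
  rho psi (br v w) = sf_add (br (rho psi v) w) (br v (rho psi w)).
Proof.
  intros (q & Hq & ->)%is_odd_odd_sf (a & Ha & ->)%is_even_even_sf
    (b & Hb & ->)%is_even_even_sf.
  unfold rho; rewrite br_even_even, !br_odd_even, br_odd_odd, !br_even_even.
  rewrite !(dxC_mult (fun _ => Copp half)), dxC_const, !dxC_mult;
    try (apply smooth_S1_derivable_C; solve_smooth_S1).
  sfun_eq.
Qed.

Lemma br_even_jacobi (u v w : sfun) :
  is_even u -> is_even v -> is_even w ->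
  sf_add (sf_add (br u (br v w)) (br v (br w u))) (br w (br u v)) = sf0.
Proof.
  intros (a & _ & ->)%is_even_even_sf (b & _ & ->)%is_even_even_sf
    (c & _ & ->)%is_even_even_sf.
  rewrite !br_even_even, !br_even_odd; sfun_eq.
Qed.

Theorem proposition2p3 :
  (forall phi psi : sfun, is_odd phi -> is_odd psi -> is_odd (br phi psi)) /\
  (forall phi psi : sfun, is_odd phi -> is_odd psi -> br phi psi = br psi phi) /\
  (forall phi psi chi : sfun, is_odd phi -> is_odd psi -> is_odd chi ->
     br (br phi psi) chi = br phi (br psi chi)) /\
  (forall psi v : sfun, is_odd psi -> is_even v -> is_even (rho psi v)) /\
  (forall phi psi v : sfun, is_odd phi -> is_odd psi -> is_even v ->
     sf_add (rho phi (rho psi v)) (rho psi (rho phi v)) = rho (br phi psi) v) /\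
  (forall v w : sfun, is_even v -> is_even w -> is_odd (br v w)) /\
  (forall v w : sfun, is_even v -> is_even w -> br v w = sf_opp (br w v)) /\
  (forall psi v w : sfun, is_odd psi -> is_even v -> is_even w ->
     rho psi (br v w) = sf_add (br (rho psi v) w) (br v (rho psi w))) /\
  (forall u v w : sfun, is_even u -> is_even v -> is_even w ->
     sf_add (sf_add (br u (br v w)) (br v (br w u))) (br w (br u v)) = sf0).
Proof.
  split; [exact br_odd_closed|].
  split; [exact br_odd_comm|].
  split; [exact br_odd_assoc|].
  split; [exact rho_even_closed|].
  split; [exact rho_anticomm|].
  split; [exact br_even_closed|].
  split; [exact br_even_anticomm|].
  split; [exact rho_br_even|].
  exact br_even_jacobi.
Qed.
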